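(* Let $F$ be an algebraically closed field, $d\ge 2$ an integer, and $l$ the smallest prime divisor of $d$. Let $D_d$ be the set of decomposable polynomials of degree exactly $d$ in $F[x]$, viewed as a subset of the affine space of polynomials of degree at most $d$ (via their $d+1$ coefficients). Then $D_d=\varnothing$ if $d$ is prime, and otherwise $\dim D_d=l+d/l$.
   Context: For $g,h\in F[x]$, $g\circ h=g(h)$. A polynomial $f$ is decomposable if $f=g\circ h$ with $\deg g\ge2$ and $\deg h\ge 2$. The set $D_d$ is the image of a morphism of varieties (composition), and its dimension is the dimension of its Zariski closure. *)

From mathcomp Require Import all_boot all_order all_algebra.
From mathcomp Require Import mpoly.
Set Implicit Arguments. Unset Strict Implicit. Unset Printing Implicit Defensive.
Import GRing.Theory.
Local Open Scope ring_scope.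

Definition aset (F : fieldType) (n : nat) := ('I_n -> F) -> Prop.

Definition zclosed (F : fieldType) (n : nat) (Z : aset F n) : Prop :=
  exists P : {mpoly F[n]} -> Prop,
    forall x, Z x <-> (forall p, P p -> p.@[x] = 0).

Definition zclosure (F : fieldType) (n : nat) (S : aset F n) : aset F n :=
  fun x => forall p : {mpoly F[n]}, (forall y, S y -> p.@[y] = 0) -> p.@[x] = 0.

Definition asubset (F : fieldType) (n : nat) (A B : aset F n) : Prop :=
  forall x, A x -> B x.

Definition zirreducible (F : fieldType) (n : nat) (Z : aset F n) : Prop :=
  [/\ exists x, Z x, zclosed Z &
      forall A B : aset F n, zclosed A -> zclosed B ->
        asubset Z (fun x => A x \/ B x) -> asubset Z A \/ asubset Z B].

Definition zchain (F : fieldType) (n : nat) (V : aset F n) (k : nat)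
  (Z : nat -> aset F n) : Prop :=
  (forall i, (i <= k)%N -> zirreducible (Z i) /\ asubset (Z i) V) /\
  (forall i, (i < k)%N -> asubset (Z i) (Z i.+1) /\ ~ asubset (Z i.+1) (Z i)).

Definition zdim_eq (F : fieldType) (n : nat) (V : aset F n) (m : nat) : Prop :=
  (exists Z, zchain V m Z) /\ (forall k Z, zchain V k Z -> (k <= m)%N).

Definition dim_eq (F : fieldType) (n : nat) (S : aset F n) (m : nat) : Prop :=
  zdim_eq (zclosure S) m.

(* f = g o h with deg g >= 2, deg h >= 2 (size = deg + 1). *)
Definition decomposable (F : fieldType) (f : {poly F}) : Prop :=
  exists g h : {poly F}, (2 < size g)%N /\ (2 < size h)%N /\ f = g \Po h.

Definition Dset (F : fieldType) (d : nat) : aset F d.+1 :=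
  fun c => let f := \poly_(i < d.+1) c (inord i) in
           size f = d.+1 /\ decomposable f.

From mathcomp Require Import all_boot all_order all_algebra all_field.
From mathcomp Require Import mpoly.
From Stdlib Require Import Classical.
From mathcomp Require Import zify.
Set Implicit Arguments. Unset Strict Implicit. Unset Printing Implicit Defensive.
Import GRing.Theory.
Local Open Scope ring_scope.

(* Write d = a b with a, b >= 2.  Up to an affine change of variables every
   decomposition f = g o h can be taken with h monic and h(0) = 0, so D_d is
   covered by the images of the polynomial maps A^(a+b) -> A^(d+1),
   (g, h) |-> g o h, one for each such factorisation.  A chain of length k of
   irreducible closed subsets of the closure of D_d yields k polynomials
   algebraically independent on it, whereas any a + b + 1 polynomials in a + b
   variables are algebraically dependent; hence dim D_d <= max (a + b) =
   l + d/l.  Conversely, freeing the a + b parameters of the (l, d/l)-family one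
   at a time gives a strictly increasing chain of irreducible closures of length
   l + d/l. *)

Local Notation widen := (widen_ord (leqnSn _)).

Lemma lift_max n (i : 'I_n) : lift ord_max i = widen i.
Proof. by apply: val_inj => /=; rewrite /bump leqNgt ltn_ord. Qed.

Lemma unlift_max_widen n (i : 'I_n) : unlift ord_max (widen i) = Some i.
Proof. by rewrite -lift_max liftK. Qed.

Lemma mnm_widen_max_eq n (m1 m2 : 'X_{1..n.+1}) :
  (forall i : 'I_n, m1 (widen i) = m2 (widen i)) -> m1 ord_max = m2 ord_max ->
  m1 = m2.
Proof.
move=> Ew Emax; apply/mnmP => i.
by case: (unliftP ord_max i) => [j ->|->] //; rewrite lift_max; apply: Ew.
Qed.

Section Muni.
Variable R : comNzRingType.

Lemma muni_eq0 n (p : {mpoly R[n.+1]}) : (muni p == 0) = (p == 0).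
Proof.
apply/idP/idP => [/eqP p0|/eqP ->]; last by rewrite raddf0.
apply/negPn/negP => pn0.
have [m0 m0p] : exists m0, m0 \in msupp p.
  case E: (msupp p) => [|m0 s]; last by exists m0; rewrite inE eqxx.
  by move/eqP: E; rewrite msupp_eq0 (negbTE pn0).
pose m0' := [multinom m0 (widen i) | i < n].
have := congr1 (fun P : {poly {mpoly R[n]}} => (P`_(m0 ord_max))@_m0') p0.
rewrite coef0 mcoeff0 muniE coef_sum raddf_sum /=.
rewrite (bigD1_seq m0) ?msupp_uniq //= big1_seq.
- rewrite coefZ coefXn eqxx mulr1 mcoeffZ mcoeffX eqxx mulr1 addr0 => E.
  by move: m0p; rewrite mcoeff_msupp E eqxx.
- move=> m /andP [mm0 _]; rewrite coefZ coefXn.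
  case: eqP => [Emax|_]; last by rewrite mulr0 mcoeff0.
  rewrite mulr1 mcoeffZ mcoeffX; case: eqP => [Ew|]; last by rewrite mulr0.
  case/eqP: mm0; apply: mnm_widen_max_eq => // i.
  by have := congr1 (fun m : 'X_{1..n} => m i) Ew; rewrite !mnmE.
Qed.

Lemma meval_muni n (p : {mpoly R[n.+1]}) (v : 'I_n.+1 -> R) :
  p.@[v] = (map_poly (meval (fun i => v (widen i))) (muni p)).[v ord_max].
Proof.
rewrite muniE mevalE raddf_sum /= horner_sum; apply: eq_bigr => m _.
rewrite map_polyZ /= map_polyXn hornerZ hornerXn mevalZ mevalX.
rewrite big_ord_recr /= mulrA; congr (_ * _ * _).
by apply: eq_bigr => i _; rewrite mnmE.
Qed.

End Muni.

Lemma mpoly_exists_nonroot (F : closedFieldType) n (p : {mpoly F[n]}) :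
  p != 0 -> exists v, p.@[v] != 0.
Proof.
elim: n p => [|n IH] p pn0.
  exists (fun _ => 0); rewrite {1}(nvar0_mpolyC p) mevalC.
  by apply: contra pn0 => /eqP E; rewrite (nvar0_mpolyC p) E.
have lc0 : lead_coef (muni p) != 0 by rewrite lead_coef_eq0 muni_eq0.
have [u Hu] := IH _ lc0.
pose P := map_poly (meval u) (muni p).
have Pn0 : P != 0.
  by apply: contra Hu => /eqP HP; rewrite lead_coefE -coef_map -/P HP coef0.
have [x Hx] : exists x, ~~ root P x by apply/closed_nonrootP.
exists (fun i : 'I_n.+1 => if unlift ord_max i is Some j then u j else x).
rewrite meval_muni unlift_none (_ : map_poly _ _ = P) //.
by apply: eq_map_poly => q; apply: meval_eq => i /=; rewrite unlift_max_widen.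
Qed.

Lemma poly_Xn_factor (R : nzRingType) (p : {poly R}) : p != 0 ->
  exists e (q : {poly R}), p = 'X^e * q /\ q`_0 != 0.
Proof.
move: {2}(size p) (leqnn (size p)) => s; elim: s p => [|s IH] p.
  by rewrite size_poly_leq0 => /eqP -> /eqP.
move=> sp pn0; have [p0|p0] := eqVneq p`_0 0; last first.
  by exists 0%N, p; rewrite expr0 mul1r.
have pX : p = drop_poly 1 p * 'X.
  have tk : take_poly 1 p = 0.
    by apply/polyP => -[|i]; rewrite coef_take_poly coef0.
  by rewrite -{1}(poly_take_drop 1 p) tk add0r expr1.
have qn0 : drop_poly 1 p != 0 by apply: contra pn0 => /eqP E; rewrite pX E mul0r.
have [|e [q [E1 E2]]] := IH _ _ qn0.
  by rewrite size_drop_poly; case: (size p) sp => //= m; rewrite subn1 ltnS.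
by exists e.+1, q; rewrite pX E1 -mulrA (commr_polyX q) mulrA -exprSr.
Qed.

Section ZariskiClosure.
Variables (F : fieldType) (n : nat).
Implicit Types (S T A B : aset F n) (p : {mpoly F[n]}).

Definition vanishes S p := forall y, S y -> p.@[y] = 0.

Definition separated A B := exists p, vanishes A p /\ exists y, B y /\ p.@[y] != 0.

Lemma not_asubset_ex A B : ~ asubset A B -> exists x, A x /\ ~ B x.
Proof.
by move=> /not_all_ex_not [x /(imply_to_and (A x))]; exists x.
Qed.

Lemma sub_zclosure S : asubset S (zclosure S).
Proof. by move=> x Sx p Hp; apply: Hp. Qed.

Lemma vanishes_zclosure S p : vanishes S p -> vanishes (zclosure S) p.
Proof. by move=> Hp y Hy; apply: Hy. Qed.

Lemma zclosureS S T : asubset S T -> asubset (zclosure S) (zclosure T).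
Proof. by move=> ST x Hx p Hp; apply: Hx => y Sy; apply: Hp; apply: ST. Qed.

Lemma zclosed_zclosure S : zclosed (zclosure S).
Proof. by exists (vanishes S). Qed.

Lemma zclosed_zero_locus p : zclosed (fun y => p.@[y] = 0).
Proof. by exists (eq^~ p) => x; split=> [px q ->|/(_ p erefl)]. Qed.

Lemma zclosed_nonvanishing A x : zclosed A -> ~ A x ->
  exists p, vanishes A p /\ p.@[x] != 0.
Proof.
move=> [P HP] nAx.
have /not_all_ex_not [p /(imply_to_and (P p)) [Pp px]] : ~ (forall p, P p -> p.@[x] = 0).
  by move=> H; apply/nAx/HP.
exists p; split; last exact/eqP.
by move=> y /HP; apply.
Qed.

Lemma separated_zclosure A B : separated A B -> ~ asubset (zclosure B) (zclosure A).
Proof.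
move=> [p [Ap [y [By py]]]] BA.
by move: py; rewrite (vanishes_zclosure Ap (BA y (sub_zclosure By))) eqxx.
Qed.

Lemma separated_coord A B (c : 'I_n) x :
  (forall y, A y -> y c = x) -> (exists y, B y /\ y c != x) -> separated A B.
Proof.
move=> Ac [y [By yc]]; exists ('X_c - x%:MP); split; last exists y.
  by move=> z Az; rewrite mevalB mevalXU mevalC Ac ?subrr.
by rewrite mevalB mevalXU mevalC subr_eq0.
Qed.

End ZariskiClosure.

Section PolynomialImage.
Variable F : closedFieldType.

Definition mpoly_image k n (P : 'I_n -> {mpoly F[k]}) (u : {mpoly F[k]}) : aset F n :=
  fun y => exists t, u.@[t] != 0 /\ forall c, y c = (P c).@[t].

Lemma meval_comp_fun k n (P : 'I_n -> {mpoly F[k]}) (p : {mpoly F[n]}) t :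
  p.@[fun c => (P c).@[t]] = (p \mPo [tuple P c | c < n]).@[t].
Proof. by rewrite comp_mpoly_meval; apply: meval_eq => i; rewrite tnth_mktuple. Qed.

(* Pulled back along P and multiplied by u, a polynomial vanishing on the
   closure of the image becomes the zero polynomial; so the product of two
   polynomials separating the closure from A and from B cannot vanish on it. *)
Lemma zirreducible_zclosure_image k n (P : 'I_n -> {mpoly F[k]}) u :
  u != 0 -> zirreducible (zclosure (mpoly_image P u)).
Proof.
set Z := zclosure _ => un0; split; [|exact: zclosed_zclosure|].
  have [t Ht] := mpoly_exists_nonroot un0.
  by exists (fun c => (P c).@[t]); apply: sub_zclosure; exists t.
move=> A B cA cB ZAB; apply: NNPP => /not_or_and [/not_asubset_ex nA /not_asubset_ex nB].
have [xA [ZxA /(zclosed_nonvanishing cA) [pA [vA pAx]]]] := nA.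
have [xB [ZxB /(zclosed_nonvanishing cB) [pB [vB pBx]]]] := nB.
have pull q x : Z x -> q.@[x] != 0 -> q \mPo [tuple P c | c < n] != 0.
  move=> Zx; apply: contra => /eqP qP; apply/eqP/Zx => y [t [_ yt]].
  by rewrite (meval_eq _ yt) meval_comp_fun qP meval0.
have := mulf_neq0 (mulf_neq0 (pull _ _ ZxA pAx) (pull _ _ ZxB pBx)) un0.
case/mpoly_exists_nonroot => t; rewrite !mevalM !mulf_eq0 !negb_or.
case/andP => /andP [tA tB] tu.
have Zt : Z (fun c => (P c).@[t]) by apply: sub_zclosure; exists t.
by case: (ZAB _ Zt) => [/vA | /vB]; rewrite meval_comp_fun => E;
  [move: tA | move: tB]; rewrite E eqxx.
Qed.

End PolynomialImage.

Section AlgebraicIndependence.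
Variable F : closedFieldType.

Definition alg_indep_on n (Z : aset F n) k (q : 'I_k -> {mpoly F[n]}) :=
  forall R : {mpoly F[k]}, R != 0 -> exists y, Z y /\ R.@[fun i => (q i).@[y]] != 0.

Definition extend_family n k (q : 'I_k -> {mpoly F[n]}) (p : {mpoly F[n]}) :
  'I_k.+1 -> {mpoly F[n]} :=
  fun j => if unlift ord_max j is Some j' then q j' else p.

(* If R(q, p) vanished on Z2, write R = X_k^e R' with R'(., 0) <> 0.  As p is
   not identically 0 on the irreducible Z2, R'(q, p) vanishes on Z2, hence
   R'(q, 0) vanishes on Z1, where p = 0. *)
Lemma alg_indep_on_extend n (Z1 Z2 : aset F n) k (q : 'I_k -> {mpoly F[n]}) p :
  alg_indep_on Z1 q -> zirreducible Z2 -> asubset Z1 Z2 -> vanishes Z1 p ->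
  (exists y0, Z2 y0 /\ p.@[y0] != 0) -> alg_indep_on Z2 (extend_family q p).
Proof.
move=> iZ1 [_ _ irr] Z12 vp [y0 [Zy0 py0]] R Rn0.
apply: NNPP => /(not_ex_all_not _ _) nR.
have mn0 : muni R != 0 by rewrite muni_eq0.
have [e [R' [ER R'0]]] := poly_Xn_factor mn0.
pose Q := \sum_(j < size R') (R'`_j \mPo [tuple q i | i < k]) * p ^+ j.
have QE y : Q.@[y] = (map_poly (meval (fun i => (q i).@[y])) R').[p.@[y]].
  rewrite (@horner_coef_wide _ (size R')); last exact: size_poly.
  rewrite raddf_sum /=; apply: eq_bigr => j _.
  by rewrite mevalM rmorphXn coef_map -meval_comp_fun.
have RE y : R.@[fun i => (extend_family q p i).@[y]] = p.@[y] ^+ e * Q.@[y].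
  rewrite meval_muni ER rmorphM /= map_polyXn hornerM hornerXn QE.
  rewrite /extend_family unlift_none; congr (_ * _); congr horner.
  by apply: eq_map_poly => r; apply: meval_eq => i; rewrite unlift_max_widen.
have : asubset Z2 (fun y => p.@[y] = 0) \/ asubset Z2 (fun y => Q.@[y] = 0).
  apply: irr; try exact: zclosed_zero_locus.
  move=> y Zy; have /eqP : R.@[fun i => (extend_family q p i).@[y]] = 0.
    by apply: NNPP => nz; apply: (nR y); split=> //; apply/eqP.
  by rewrite RE mulf_eq0 expf_eq0 => /orP [/andP [_ /eqP ->]|/eqP ->]; [left|right].
case=> [/(_ y0 Zy0) E|ZQ]; first by move: py0; rewrite E eqxx.
have [y [Zy]] := iZ1 _ R'0.
rewrite -[X in X != 0]/((R'`_0%N).@[fun i => (q i).@[y]]).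
have := ZQ y (Z12 y Zy); rewrite QE (vp y Zy) horner_coef0 coef_map => ->.
by rewrite eqxx.
Qed.

Lemma zchain_alg_indep n (V : aset F n) k Z : zchain V k Z ->
  exists q : 'I_k -> {mpoly F[n]}, alg_indep_on (Z k) q.
Proof.
move=> [HZ Hs].
suff : forall i, (i <= k)%N -> exists q : 'I_i -> {mpoly F[n]}, alg_indep_on (Z i) q.
  by apply.
elim=> [_|i IH ik].
  exists (fun _ => 0) => R Rn0; have [[y Zy] _ _] := (HZ 0%N isT).1.
  have [v Hv] := mpoly_exists_nonroot Rn0; exists y; split=> //.
  by rewrite (@meval_eq _ _ _ v) // => -[].
have [q Hq] := IH (ltnW ik).
have [Z12 /not_asubset_ex [y0 [Zy0 nZy0]]] := Hs i ik.
have [_ cZi _] := (HZ i (ltnW ik)).1.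
have [p [vp py0]] := zclosed_nonvanishing cZi nZy0.
exists (extend_family q p); apply: (alg_indep_on_extend Hq) => //.
  exact: (HZ _ ik).1.
by exists y0.
Qed.

End AlgebraicIndependence.

Section AlgebraicDependence.
Variable F : fieldType.

Lemma exists_nz_left_kernel m n (A : 'M[F]_(m, n)) : (n < m)%N ->
  exists2 v : 'rV_m, v != 0 & v *m A = 0.
Proof.
move=> nm.
have kn0 : kermx A != 0.
  rewrite -mxrank_eq0 mxrank_ker subn_eq0 -ltnNge.
  exact: leq_ltn_trans (rank_leq_col A) nm.
have [r Hr] : exists r, row r (kermx A) != 0.
  apply: NNPP => H; move/eqP: kn0; apply; apply/row_matrixP => r.
  by rewrite row0; apply/eqP; apply: NNPP => Hr; apply: H; exists r; apply/negP.
by exists (row r (kermx A)); rewrite // -row_mul mulmx_ker row0.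
Qed.

Lemma msize_prod_le N (I : Type) (r : seq I) (f : I -> {mpoly F[N]}) :
  (msize (\prod_(i <- r) f i) <= (\sum_(i <- r) (msize (f i)).+1).+1)%N.
Proof.
elim: r => [|a r IH]; first by rewrite !big_nil msize1.
by rewrite !big_cons; apply: leq_trans (msizeM_le _ _) _; move: IH; lia.
Qed.

Lemma msize_exp_le N (p : {mpoly F[N]}) e :
  (msize (p ^+ e) <= e * (msize p).+1 + 1)%N.
Proof.
elim: e => [|e IH]; first by rewrite expr0 msize1.
by rewrite exprS; apply: leq_trans (msizeM_le _ _) _; move: IH; lia.
Qed.

Lemma msize_prod_exp_le N k S D (s : 'I_k -> {mpoly F[N]}) (e : 'I_k -> nat) :
  (forall i, msize (s i) <= S)%N -> (forall i, e i < D)%N ->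
  (msize (\prod_(i < k) s i ^+ e i) <= k * D * (S + 2) + 1)%N.
Proof.
move=> sS eD; apply: leq_trans (msize_prod_le _ _) _.
have factor_le i : ((msize (s i ^+ e i)).+1 <= D * (S + 2))%N.
  have := msize_exp_le (s i) (e i); have := sS i; have := eD i; nia.
have := @leq_sum _ (index_enum 'I_k) xpredT _ (fun=> (D * (S + 2))%N)
  (fun i _ => factor_le i).
by rewrite sum_nat_const card_ord -mulnA addn1 ltnS.
Qed.

Lemma mnm_le_mdeg N (mu : 'X_{1..N}) i : (mu i <= mdeg mu)%N.
Proof. by rewrite mdegE (bigD1 i) //= leq_addr. Qed.

(* The coefficients of the p u live on the B^N monomials with exponents < B. *)
Lemma mpoly_lin_dep N (U : finType) B (p : U -> {mpoly F[N]}) :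
  (B ^ N < #|U|)%N -> (forall u, msize (p u) <= B)%N ->
  exists2 c : U -> F, exists u, c u != 0 & \sum_u c u *: p u = 0.
Proof.
move=> cardU szp.
pose T := {ffun 'I_N -> 'I_B}.
pose monT (t : T) : 'X_{1..N} := [multinom (t i : nat) | i < N].
pose A : 'M[F]_(#|U|, #|T|) :=
  \matrix_(r, c) (p (enum_val r))@_(monT (enum_val c)).
have cardT : (#|T| < #|U|)%N by rewrite card_ffun !card_ord.
have [v vn0 vA] := exists_nz_left_kernel A cardT.
exists (fun u => v 0 (enum_rank u)).
  have [r vr] : exists r, v 0 r != 0.
    apply: NNPP => H; move/eqP: vn0; apply; apply/rowP => r.
    by rewrite mxE; apply/eqP; apply: NNPP => Hr; apply: H; exists r; apply/negP.
  by exists (enum_val r); rewrite enum_valK.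
apply/mpolyP => mu; rewrite mcoeff0 raddf_sum /=.
have [muB|muB] := ltnP (mdeg mu) B; last first.
  rewrite big1 // => u _; rewrite mcoeffZ.
  have : mu \notin msupp (p u) by apply/msize_mdeg_ge/(leq_trans (szp u)).
  by rewrite mcoeff_msupp negbK => /eqP ->; rewrite mulr0.
have mu_lt i : (mu i < B)%N := leq_ltn_trans (mnm_le_mdeg mu i) muB.
pose t : T := [ffun i => Ordinal (mu_lt i)].
have mt : monT t = mu by apply/mnmP => i; rewrite mnmE ffunE.
have := congr1 (fun M : 'rV_#|T| => M 0 (enum_rank t)) vA.
rewrite !mxE /= => E; apply: (eq_trans _ E).
rewrite (reindex (@enum_rank U)) /=; last exact: onW_bij (@enum_rank_bij U).
by apply: eq_bigr => u _; rewrite mcoeffZ mxE !enum_rankK mt.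
Qed.

Lemma exponent_count_bound N k S D : (N < k)%N ->
  D = ((k * (S + 2) + 1) ^ N + 1)%N -> ((k * D * (S + 2) + 1) ^ N < D ^ k)%N.
Proof.
move=> Nk DE; set X := (k * (S + 2) + 1)%N.
have BX : (k * D * (S + 2) + 1 <= D * X)%N by rewrite /X DE; nia.
have XD : (X ^ N < D)%N by rewrite DE addn1.
have D0 : (0 < D)%N by rewrite DE addn1.
apply: (@leq_ltn_trans ((D * X) ^ N)).
  by case: (posnP N) => [->|N0]; rewrite ?expn0 // leq_exp2r.
rewrite expnMn; apply: (@leq_trans (D ^ N * D)).
  by rewrite ltn_mul2l expn_gt0 D0.
by rewrite -expnSr leq_pexp2l.
Qed.

(* The D^k products of the s_i with exponents < D outnumber the monomials in N
   variables that their size allows; a linear relation among them is an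
   algebraic relation among the s_i. *)
Lemma mpoly_alg_dep N k (s : 'I_k -> {mpoly F[N]}) : (N < k)%N ->
  exists2 R : {mpoly F[k]}, R != 0 & R \mPo [tuple s i | i < k] = 0.
Proof.
move=> Nk.
pose S := (\max_(i < k) msize (s i))%N.
pose D := ((k * (S + 2) + 1) ^ N + 1)%N.
pose U := {ffun 'I_k -> 'I_D}.
pose mon (e : U) : 'X_{1..k} := [multinom (e i : nat) | i < k].
pose sp (e : U) := \prod_(i < k) s i ^+ e i.
have cardU : ((k * D * (S + 2) + 1) ^ N < #|U|)%N.
  by rewrite card_ffun !card_ord; apply: exponent_count_bound.
have szsp e : (msize (sp e) <= k * D * (S + 2) + 1)%N.
  apply: msize_prod_exp_le => i //.
  exact: (leq_bigmax_cond (F := fun i => msize (s i))).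
have [c [u cu] csp] := mpoly_lin_dep cardU szsp.
have mon_inj : injective mon.
  move=> e1 e2 /mnmP E; apply/ffunP => i; apply: val_inj.
  by have := E i; rewrite !mnmE.
exists (\sum_(e : U) c e *: 'X_[mon e]).
  apply/eqP => /(congr1 (mcoeff (mon u))).
  rewrite mcoeff0 raddf_sum /= (bigD1 u) //= big1 ?addr0.
    by rewrite mcoeffZ mcoeffX eqxx mulr1 => cu0; rewrite cu0 eqxx in cu.
  move=> e ne; rewrite mcoeffZ mcoeffX; case: eqP => [/mon_inj E|]; last by rewrite mulr0.
  by rewrite E eqxx in ne.
rewrite -csp raddf_sum /=; apply: eq_bigr => e _.
rewrite comp_mpolyZ comp_mpolyX; congr (_ *: _); apply: eq_bigr => i _.
by rewrite tnth_mktuple mnmE.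
Qed.

End AlgebraicDependence.

Section Family.
Variables (F : fieldType) (a b : nat).
Local Notation M := (a + b).-1.
Implicit Types s : 'I_M.+1 -> F.

(* A parameter s : 'I_(a + b) -> F encodes the outer polynomial
   s_0 + s_1 X + ... + s_(a-1) X^(a-1) + s_M X^a and the monic inner polynomial
   X^b + s_a X^(b-1) + ... + s_(M-1) X without constant term (M = a + b - 1). *)
Definition outer_idx (j : nat) : 'I_M.+1 := inord (if (j < a)%N then j else M).
Definition inner_idx (j : nat) : 'I_M.+1 := inord (M - j).

Definition outer_gen : {poly {mpoly F[M.+1]}} := \poly_(j < a.+1) 'X_(outer_idx j).
Definition inner_gen : {poly {mpoly F[M.+1]}} :=
  'X^b + \poly_(j < b) (if j == 0%N then 0 else 'X_(inner_idx j)).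

Definition outer_poly (s : 'I_M.+1 -> F) : {poly F} := \poly_(j < a.+1) s (outer_idx j).
Definition inner_poly (s : 'I_M.+1 -> F) : {poly F} :=
  'X^b + \poly_(j < b) (if j == 0%N then 0 else s (inner_idx j)).

Definition comp_coef (i : nat) : {mpoly F[M.+1]} := (outer_gen \Po inner_gen)`_i.

Lemma meval_comp_coef i s : (comp_coef i).@[s] = (outer_poly s \Po inner_poly s)`_i.
Proof.
have EG : map_poly (meval s) outer_gen = outer_poly s.
  apply/polyP => j; rewrite coef_map !coef_poly.
  by case: ifP => _; [exact: mevalXU | exact: meval0].
have EH : map_poly (meval s) inner_gen = inner_poly s.
  rewrite rmorphD /= map_polyXn; congr (_ + _).
  apply/polyP => j; rewrite coef_map !coef_poly.
  case: ifP => _; last exact: meval0.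
  by case: ifP => _; [exact: meval0 | exact: mevalXU].
by rewrite -coef_map map_comp_poly EG EH.
Qed.

Lemma eq_outer_comp_inner s1 s2 : s1 =1 s2 ->
  outer_poly s1 \Po inner_poly s1 = outer_poly s2 \Po inner_poly s2.
Proof.
move=> E; have -> : outer_poly s1 = outer_poly s2 by apply: eq_poly => j _.
by congr (_ \Po (_ + _)); apply: eq_poly => j _; rewrite E.
Qed.

Hypothesis a1 : (1 <= a)%N.
Hypothesis b1 : (1 <= b)%N.

Lemma coef_outer_poly s j : (outer_poly s)`_j =
  if (j < a)%N then s (inord j) else if j == a then s (inord M) else 0.
Proof. by rewrite coef_poly /outer_idx ltnS leq_eqVlt; case: ltngtP. Qed.

Lemma coef_inner_poly s j : (inner_poly s)`_j =
  if j == b then 1 else if (0 < j < b)%N then s (inord (M - j)) else 0.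
Proof.
rewrite coefD coefXn coef_poly /inner_idx.
case: ltngtP => jb /=; rewrite ?addr0 ?andbF //.
by rewrite add0r andbT; case: j jb.
Qed.

Lemma size_outer_poly s : s (inord M) != 0 -> size (outer_poly s) = a.+1.
Proof. by move=> sM; rewrite size_poly_eq //= /outer_idx ltnn. Qed.

Lemma lead_coef_outer_poly s : s (inord M) != 0 -> lead_coef (outer_poly s) = s (inord M).
Proof.
by move=> sM; rewrite lead_coefE size_outer_poly // coef_outer_poly ltnn eqxx.
Qed.

Lemma size_inner_low s :
  (size (\poly_(j < b) (if j == 0%N then 0%R else s (inner_idx j)))
   < size ('X^b : {poly F}))%N.
Proof. by rewrite size_polyXn ltnS; apply: size_poly. Qed.

Lemma size_inner_poly s : size (inner_poly s) = b.+1.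
Proof. by rewrite size_polyDl ?size_inner_low // size_polyXn. Qed.

Lemma inner_poly_monic s : inner_poly s \is monic.
Proof. by rewrite monicE lead_coefDl ?size_inner_low // lead_coefXn. Qed.

Lemma inner_poly_eq_Xn s : (forall j, (a <= j < M)%N -> s (inord j) = 0) ->
  inner_poly s = 'X^b.
Proof.
move=> s0; apply/polyP => j; rewrite coef_inner_poly coefXn.
by case: eqP => // _; case: ifP => // /andP [j0 jb]; apply: s0; lia.
Qed.

Lemma coef_inner_poly_low s k : (k < b)%N ->
  (forall j, (M - k < j < M)%N -> s (inord j) = 0) ->
  forall j, (j < k)%N -> (inner_poly s)`_j = 0.
Proof.
move=> kb s0 j jk; rewrite coef_inner_poly ifF; last lia.
by case: ifP => // /andP [j0 jb]; apply: s0; lia.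
Qed.

Lemma size_outer_comp_inner s : s (inord M) != 0 ->
  size (outer_poly s \Po inner_poly s) = (a * b).+1.
Proof.
move=> sM; have := size_comp_poly (outer_poly s) (inner_poly s).
rewrite size_outer_poly // size_inner_poly /= => E.
have : size (outer_poly s \Po inner_poly s) != 0%N.
  rewrite size_poly_eq0 comp_poly_eq0 ?size_inner_poly //.
  by rewrite -size_poly_eq0 size_outer_poly.
by case: (size _) E => //= n ->.
Qed.

Lemma lead_outer_comp_inner s : s (inord M) != 0 ->
  (outer_poly s \Po inner_poly s)`_(a * b) = s (inord M).
Proof.
move=> sM; have := @lead_coef_comp _ (outer_poly s) (inner_poly s).
rewrite size_inner_poly ltnS => /(_ b1).
rewrite lead_coefE size_outer_comp_inner //= => ->.
by rewrite (monicP (inner_poly_monic s)) expr1n mulr1 lead_coef_outer_poly.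
Qed.

Lemma outer_inner_poly_onto (g h : {poly F}) :
  size g = a.+1 -> size h = b.+1 -> h \is monic -> h`_0 = 0 ->
  exists s, outer_poly s = g /\ inner_poly s = h.
Proof.
move=> sg sh hm h0.
exists (fun i : 'I_M.+1 =>
  if (i < a)%N then g`_i else if (i == M :> nat) then g`_a else h`_(M - i)).
split; apply/polyP => j.
  rewrite coef_outer_poly; case: ltnP => ja.
    by rewrite inordK ?ja //; lia.
  case: eqP => [->|jna]; first by rewrite inordK // ifF ?eqxx //; lia.
  by rewrite nth_default // sg; lia.
rewrite coef_inner_poly; case: eqP => [->|jb].
  by have /monicP := hm; rewrite /lead_coef sh.
case: ifP => hj.
  by rewrite inordK; [rewrite !ifF; [congr h`_ _|..]|]; lia.
case: j jb hj => [|j] jb hj; first by rewrite h0.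
by rewrite nth_default // sh; lia.
Qed.

Lemma Dset_outer_comp_inner d s : (2 <= a)%N -> (2 <= b)%N -> d = (a * b)%N ->
  s (inord M) != 0 -> Dset (fun c : 'I_d.+1 => (outer_poly s \Po inner_poly s)`_c).
Proof.
move=> a2 b2 -> sM; rewrite /Dset.
have -> : \poly_(i < (a * b).+1) (outer_poly s \Po inner_poly s)`_(@inord (a * b) i)
    = outer_poly s \Po inner_poly s.
  apply/polyP => i; rewrite coef_poly; case: ifP => hi; first by rewrite inordK.
  by rewrite nth_default // size_outer_comp_inner // leqNgt hi.
split; first exact: size_outer_comp_inner.
by exists (outer_poly s), (inner_poly s); rewrite size_outer_poly // size_inner_poly.
Qed.

End Family.

(* Replace (g, h) by (g o l, l^-1 o h) for the affine l = lead(h) X + h(0). *)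
Lemma decomposable_monic (F : fieldType) (f : {poly F}) : decomposable f ->
  exists g h : {poly F},
    [/\ (2 < size g)%N, (2 < size h)%N, h \is monic, h`_0 = 0 & f = g \Po h].
Proof.
move=> [g [h [sg [sh ->]]]].
have hn0 : lead_coef h != 0.
  by rewrite lead_coef_eq0 -size_poly_eq0; case: (size h) sh.
set lam := lead_coef h in hn0; set mu := h`_0.
pose h' := lam^-1 *: (h - mu%:P).
pose l := lam *: 'X + mu%:P.
have szhm : size (h - mu%:P) = size h.
  by rewrite size_polyDl // size_polyN (leq_ltn_trans (size_polyC_leq1 _)) // ltnW.
have szl : size l = 2%N.
  rewrite size_polyDl size_scale // size_polyX //.
  exact: leq_ltn_trans (size_polyC_leq1 _) _.
exists (g \Po l), h'; split.
- by rewrite size_comp_poly2.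
- by rewrite size_scale ?invr_eq0 // szhm.
- rewrite monicE lead_coefZ /lead_coef szhm coefB coefC.
  rewrite ifF; last by case: (size h) sh => // -[].
  by rewrite subr0 mulVf.
- by rewrite coefZ coefB coefC /= subrr mulr0.
rewrite -comp_polyA /l comp_polyD comp_polyZ comp_polyX comp_polyC /h'.
by rewrite scalerA mulfV // scale1r subrK.
Qed.

Lemma Dset_param (F : fieldType) d (c : 'I_d.+1 -> F) : Dset c ->
  exists a b, [/\ (2 <= a)%N, (2 <= b)%N, d = (a * b)%N &
    exists s, forall i : 'I_d.+1,
      c i = (@outer_poly F a b s \Po @inner_poly F a b s)`_i].
Proof.
move=> [szf /decomposable_monic [g [h [sg sh hm h0 fE]]]].
pose a := (size g).-1; pose b := (size h).-1.
have a2 : (2 <= a)%N by rewrite /a; case: (size g) sg.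
have b2 : (2 <= b)%N by rewrite /b; case: (size h) sh.
have dab : d = (a * b)%N by have := size_comp_poly g h; rewrite -fE szf.
have [||s [gs hs]] := @outer_inner_poly_onto F a b (ltnW a2) (ltnW b2) g h _ _ hm h0.
- by rewrite /a; case: (size g) sg.
- by rewrite /b; case: (size h) sh.
exists a, b; split => //; exists s => i.
by rewrite gs hs -fE coef_poly ltn_ord inord_val.
Qed.

Lemma factor_sum_bound d a b : (2 <= a)%N -> (2 <= b)%N -> d = (a * b)%N ->
  (a + b <= pdiv d + d %/ pdiv d)%N.
Proof.
move=> a2 b2 dE.
have la : (pdiv d <= a)%N by apply: pdiv_min_dvd => //; rewrite dE dvdn_mulr.
have lb : (pdiv d <= b)%N by apply: pdiv_min_dvd => //; rewrite dE dvdn_mull.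
have lq : (pdiv d * (d %/ pdiv d) = d)%N by rewrite mulnC divnK // pdiv_dvd.
have l0 := pdiv_gt0 d.
move: la lb lq l0; set l := pdiv d; set q := (d %/ l)%N; rewrite dE; nia.
Qed.

Lemma pdiv_factor d : (2 <= d)%N -> ~ prime d ->
  [/\ (2 <= pdiv d)%N, (2 <= d %/ pdiv d)%N & d = (pdiv d * (d %/ pdiv d))%N].
Proof.
move=> d2 npd; have l2 : (2 <= pdiv d)%N by apply/prime_gt1/pdiv_prime.
have dE : d = (pdiv d * (d %/ pdiv d))%N by rewrite mulnC divnK // pdiv_dvd.
split=> //; case E: (d %/ pdiv d)%N => [|[|n]] //; move: dE; rewrite E.
  by rewrite muln0 => d0; rewrite d0 in d2.
by rewrite muln1 => dE; case: npd; rewrite dE pdiv_prime.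
Qed.

Section UpperBound.
Variables (F : closedFieldType) (d : nat).

Lemma common_relation k (q : 'I_k -> {mpoly F[d.+1]}) (r : seq nat) :
  (forall a, a \in r -> ((a + d %/ a).-1.+1 < k)%N) ->
  exists2 R : {mpoly F[k]}, R != 0 & forall a, a \in r ->
    forall s : 'I_((a + d %/ a).-1).+1 -> F,
      R.@[fun i => (q i).@[fun c : 'I_d.+1 =>
        (@outer_poly F a (d %/ a) s \Po @inner_poly F a (d %/ a) s)`_c]] = 0.
Proof.
elim: r => [|a r IH] rk; first by exists 1; rewrite ?oner_neq0.
have [R Rn0 HR] := IH (fun a' a'r => rk a' (mem_behead (s := a :: r) a'r)).
pose sq (i : 'I_k) := q i \mPo [tuple @comp_coef F a (d %/ a) c | c < d.+1].
have [Ra Ran0 HRa] := mpoly_alg_dep sq (rk a (mem_head _ _)).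
exists (Ra * R); first by rewrite mulf_neq0.
move=> a' /predU1P [->|a'r] s; rewrite mevalM; last by rewrite HR // mulr0.
rewrite -[X in X * _](_ : (Ra \mPo [tuple sq i | i < k]).@[s] = _).
  by rewrite HRa meval0 mul0r.
rewrite comp_mpoly_meval; apply: meval_eq => i; rewrite tnth_mktuple /sq.
rewrite comp_mpoly_meval; apply: meval_eq => c.
by rewrite tnth_mktuple meval_comp_coef.
Qed.

(* A chain of length k yields k polynomials algebraically independent on the
   closure, while every family of decompositions d = a b has only
   a + b <= k - 1 parameters, so one relation vanishes on all of D_d. *)
Lemma zchain_Dset_le k Z : zchain (zclosure (@Dset F d)) k Z ->
  (k <= pdiv d + d %/ pdiv d)%N.
Proof.
move=> ch; have [q iq] := zchain_alg_indep ch.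
rewrite leqNgt; apply/negP => km.
pose r := [seq a <- iota 0 d.+1 | (2 <= a)%N && (a %| d)%N && (2 <= d %/ a)%N].
have rk a : a \in r -> ((a + d %/ a).-1.+1 < k)%N.
  rewrite mem_filter => /andP [/andP [/andP [a2 ad] b2] _].
  have := factor_sum_bound a2 b2 (esym (etrans (mulnC _ _) (divnK ad))).
  by move: km; lia.
have [R Rn0 HR] := common_relation q rk.
have vanR : vanishes (@Dset F d) (R \mPo [tuple q i | i < k]).
  move=> y /Dset_param [a [b [a2 b2 dE [s ys]]]].
  have bE : (d %/ a)%N = b by rewrite dE mulKn //; apply: leq_trans a2.
  have ar : a \in r.
    rewrite mem_filter mem_iota /= bE a2 b2 dE dvdn_mulr //= ltnS.
    by rewrite -{1}(muln1 a) leq_mul2l (leq_trans _ b2) ?orbT.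
  subst b; rewrite -meval_comp_fun -(HR a ar s); apply: meval_eq => i.
  by apply: meval_eq => c; apply: ys.
have [y [Zy]] := iq R Rn0.
have Vy : zclosure (@Dset F d) y := (ch.1 k (leqnn k)).2 y Zy.
by rewrite meval_comp_fun (vanishes_zclosure vanR Vy) eqxx.
Qed.

End UpperBound.

Section LowPowers.
Variable R : comNzRingType.

Lemma coef_exp_low (h : {poly R}) k n i : (forall j, (j < k)%N -> h`_j = 0) ->
  (i < n * k)%N -> (h ^+ n)`_i = 0.
Proof.
move=> hk; elim: n i => [|n IH] i // ik; rewrite exprS coefM big1 // => j _.
have [jk|jk] := ltnP j k; first by rewrite hk ?mul0r.
by rewrite IH ?mulr0 //; move: ik jk; case: j => j /=; lia.
Qed.

Lemma coef_comp_poly_low (g h : {poly R}) k : (0 < k)%N ->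
  (forall j, (j < k)%N -> h`_j = 0) -> (g \Po h)`_k = g`_1 * h`_k.
Proof.
move=> k0 hk; rewrite comp_polyE coef_sum.
rewrite (eq_bigr (fun j : 'I_(size g) => if j == 1%N :> nat then g`_1 * h`_k else 0)).
  rewrite -big_mkcond /=; case: (ltnP 1 (size g)) => [g1|sg].
    by rewrite (big_pred1 (Ordinal g1)) // => j; rewrite -val_eqE.
  rewrite big_pred0 => [|j]; first by rewrite (nth_default _ sg) mul0r.
  by apply/eqP => j1; have := leq_trans (ltn_ord j) sg; rewrite j1.
move=> [[|[|j]] jg] _ /=; rewrite coefZ ?expr1 //.
  by rewrite expr0 coef1; case: k k0 hk => // k _ _; rewrite mulr0.
by rewrite (@coef_exp_low h k) ?mulr0 //; rewrite mulSn; lia.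
Qed.

End LowPowers.

Lemma closed_field_exists_neq01 (F : closedFieldType) : exists x : F, x != 0 /\ x != 1.
Proof.
have : ('X * ('X - 1) : {poly F}) != 0.
  by rewrite mulf_neq0 ?polyX_eq0 // -size_poly_eq0 size_XsubC.
case/closed_nonrootP => x; rewrite /root hornerM hornerXsubC hornerX mulf_eq0 negb_or.
by rewrite subr_eq0 => /andP [? ?]; exists x.
Qed.

Section LowerBound.
Variables (F : closedFieldType) (d a b : nat).
Hypotheses (a2 : (2 <= a)%N) (b2 : (2 <= b)%N) (dab : d = (a * b)%N).
Local Notation M := (a + b).-1.

Let a1 : (1 <= a)%N. Proof. exact: ltnW. Qed.
Let b1 : (1 <= b)%N. Proof. exact: ltnW. Qed.

(* The i-th stratum freezes the parameters j >= i: the leading coefficient of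
   the outer polynomial to 1, the others to 0.  Freeing them one at a time, in
   the order g_0, ..., g_(a-1), h_(b-1), ..., h_1, lead g, each step makes some
   coefficient of g o h non-constant: respectively those of degree
   0, b, ..., (a-1) b, then b-1, ..., 1 (triangularly, through g_1 h_k), then a b. *)
Definition mask (i : nat) (t : 'I_M.+1 -> F) : 'I_M.+1 -> F :=
  fun j => if (j < i)%N then t j else if j == M :> nat then 1 else 0.

Definition mask_mpoly (i : nat) (j : 'I_M.+1) : {mpoly F[M.+1]} :=
  if (j < i)%N then 'X_j else if j == M :> nat then 1 else 0.

Definition stratum i : aset F d.+1 :=
  mpoly_image (fun c : 'I_d.+1 => @comp_coef F a b c \mPo [tuple mask_mpoly i j | j < M.+1])
    (mask_mpoly i (inord M)).

Lemma meval_mask_mpoly i t j : (mask_mpoly i j).@[t] = mask i t j.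
Proof.
rewrite /mask_mpoly /mask; case: ifP => _; first exact: mevalXU.
by case: ifP => _; [exact: meval1 | exact: meval0].
Qed.

Lemma mask_free i t j : (j < i)%N -> (j <= M)%N -> mask i t (inord j) = t (inord j).
Proof. by move=> ji jM; rewrite /mask inordK ?ji. Qed.

Lemma mask_frozen i t j : (i <= j)%N -> (j < M)%N -> mask i t (inord j) = 0.
Proof. by move=> ij jM; rewrite /mask inordK ?ltnNge ?ij ?ifF //; lia. Qed.

Lemma mask_lead i t : (i <= M)%N -> mask i t (inord M) = 1.
Proof. by move=> iM; rewrite /mask inordK // ltnNge iM eqxx. Qed.

Lemma stratumP i y : stratum i y <-> exists t, mask i t (inord M) != 0 /\
  forall c : 'I_d.+1, y c = (outer_poly (mask i t) \Po inner_poly (mask i t))`_c.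
Proof.
have E t c : (@comp_coef F a b c \mPo [tuple mask_mpoly i j | j < M.+1]).@[t] =
    (outer_poly (mask i t) \Po inner_poly (mask i t))`_c.
  rewrite comp_mpoly_meval -meval_comp_coef; apply: meval_eq => j.
  by rewrite tnth_mktuple meval_mask_mpoly.
by split=> -[t [tM yt]]; exists t; rewrite meval_mask_mpoly in tM *;
  split=> // c; rewrite yt E.
Qed.

Lemma stratum_family i t : mask i t (inord M) != 0 ->
  stratum i (fun c => (outer_poly (mask i t) \Po inner_poly (mask i t))`_c).
Proof. by move=> tM; apply/stratumP; exists t. Qed.

Lemma mask_mpoly_lead_neq0 i : mask_mpoly i (inord M) != 0.
Proof.
apply/eqP => E; have := meval_mask_mpoly i (fun=> 1) (inord M).
by rewrite E meval0 /mask inordK // eqxx if_same => /eqP; rewrite eq_sym oner_eq0.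
Qed.

Lemma stratum_sub_Dset i : asubset (stratum i) (@Dset F d).
Proof.
move=> y /stratumP [t [tM yt]].
rewrite /Dset (@eq_poly _ _ _ (fun k => (outer_poly (mask i t) \Po inner_poly (mask i t))`_(@inord d k))).
  exact: Dset_outer_comp_inner.
by move=> k _; rewrite yt.
Qed.

Lemma stratum_sub_succ i : asubset (stratum i) (stratum i.+1).
Proof.
move=> y /stratumP [t [tM yt]]; apply/stratumP; exists (mask i t).
have E : mask i.+1 (mask i t) =1 mask i t.
  by move=> j; rewrite /mask; case: ltnP => ji; case: ltnP => ji' //; lia.
by rewrite E; split=> // c; rewrite yt (eq_outer_comp_inner E).
Qed.

Lemma stratum_step_outer i : (i < a)%N -> separated (stratum i) (stratum i.+1).
Proof.
move=> ia; have bid : (b * i < d.+1)%N by rewrite dab ltnS mulnC leq_mul2r ltnW ?orbT.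
have coef_bi (s : 'I_M.+1 -> F) : (forall j, (a <= j < M)%N -> s (inord j) = 0) ->
    (outer_poly s \Po inner_poly s)`_(b * i) = s (inord i).
  move=> s0; rewrite inner_poly_eq_Xn // coef_comp_poly_Xn ?(ltnW b2) //.
  by rewrite dvdn_mulr // mulKn ?coef_outer_poly ?ia.
apply: (@separated_coord _ _ _ _ (Ordinal bid) 0).
  move=> y /stratumP [t [_ ->]] /=.
  rewrite coef_bi => [|j /andP [aj jM]]; apply: mask_frozen; lia.
pose t := fun j : 'I_M.+1 => if j == i :> nat then 1 else 0 : F.
exists (fun c => (outer_poly (mask i.+1 t) \Po inner_poly (mask i.+1 t))`_c); split.
  by apply: stratum_family; rewrite mask_lead ?oner_neq0; lia.
rewrite /= coef_bi => [|j /andP [aj jM]]; last by apply: mask_frozen; lia.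
rewrite mask_free; [|lia|lia].
by rewrite /t inordK ?eqxx ?oner_neq0 //; lia.
Qed.

Lemma stratum_step_inner i : (a <= i < M)%N -> separated (stratum i) (stratum i.+1).
Proof.
move=> /andP [ai iM]; set k := (M - i)%N.
have kd : (k < d.+1)%N by have := leq_pmull b a1; rewrite dab /k; lia.
have k0 : (0 < k)%N by rewrite /k; lia.
have coef_k (s : 'I_M.+1 -> F) : (forall j, (i < j < M)%N -> s (inord j) = 0) ->
    (outer_poly s \Po inner_poly s)`_k = s (inord 1) * s (inord i).
  move=> s0; have hk : forall j, (j < k)%N -> (inner_poly s)`_j = 0.
    apply: coef_inner_poly_low => //; first by rewrite /k; lia.
    by move=> j jk; apply: s0; move: jk; rewrite /k; lia.
  rewrite (@coef_comp_poly_low _ _ _ k k0 hk) coef_outer_poly ifT; last lia.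
  rewrite coef_inner_poly ifF; last by rewrite /k; lia.
  rewrite ifT; last by rewrite /k; lia.
  by congr (_ * s (inord _)); rewrite /k; lia.
apply: (@separated_coord _ _ _ _ (Ordinal kd) 0).
  move=> y /stratumP [t [_ ->]] /=.
  rewrite -/k coef_k => [|j /andP [ij jM]]; last by apply: mask_frozen; lia.
  by rewrite [mask i t (inord i)]mask_frozen ?mulr0.
pose t := fun j : 'I_M.+1 => if (j == 1%N :> nat) || (j == i :> nat) then 1 else 0 : F.
exists (fun c => (outer_poly (mask i.+1 t) \Po inner_poly (mask i.+1 t))`_c); split.
  by apply: stratum_family; rewrite mask_lead ?oner_neq0; lia.
rewrite /= -/k coef_k => [|j /andP [ij jM]]; last by apply: mask_frozen; lia.
rewrite !mask_free; [|lia|lia|lia|lia].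
by rewrite /t !inordK ?eqxx ?orbT ?mulr1 ?oner_neq0 //; lia.
Qed.

Lemma stratum_step_lead : separated (stratum M) (stratum M.+1).
Proof.
have dd : (a * b < d.+1)%N by rewrite dab.
apply: (@separated_coord _ _ _ _ (Ordinal dd) 1).
  move=> y /stratumP [t [tM ->]] /=.
  by rewrite lead_outer_comp_inner // mask_lead.
have [x [x0 x1]] := closed_field_exists_neq01 F.
pose t := fun _ : 'I_M.+1 => x.
have tM := @mask_free M.+1 t M (ltnSn M) (leqnn M).
exists (fun c => (outer_poly (mask M.+1 t) \Po inner_poly (mask M.+1 t))`_c).
split; first by apply: stratum_family; rewrite tM.
by rewrite /= lead_outer_comp_inner ?tM.
Qed.

Lemma stratum_step i : (i <= M)%N -> separated (stratum i) (stratum i.+1).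
Proof.
move=> iM; have [ia|ai] := ltnP i a; first exact: stratum_step_outer.
have [iM'|Mi] := ltnP i M; first by apply: stratum_step_inner; rewrite ai.
suff -> : i = M by exact: stratum_step_lead.
by apply/eqP; rewrite eqn_leq iM.
Qed.

Lemma Dset_zchain : exists Z, zchain (zclosure (@Dset F d)) (a + b) Z.
Proof.
exists (fun i => zclosure (stratum i)); split=> i ik.
  split; first exact: zirreducible_zclosure_image (mask_mpoly_lead_neq0 i).
  exact: zclosureS (@stratum_sub_Dset i).
split; first exact: zclosureS (@stratum_sub_succ i).
by apply: separated_zclosure; apply: stratum_step; lia.
Qed.

End LowerBound.

Local Close Scope ring_scope.

Theorem theorem5p1 (F : closedFieldType) (d : nat) (hd : (2 <= d)%N) :
  (prime d -> forall c, ~ @Dset F d c) /\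
  (~ prime d -> dim_eq (@Dset F d) (pdiv d + d %/ pdiv d)).
Proof.
split.
  move=> pd c /Dset_param [a [b [a2 b2 dE _]]].
  have ad : a %| d by rewrite dE dvdn_mulr.
  have /(prime_nt_dvdP pd) /(_ ad) aE : a != 1 by case: a a2 {dE ad} => [|[|]].
  by move: dE; rewrite -aE; nia.
move=> npd; have [l2 q2 dE] := pdiv_factor hd npd.
split; first exact: Dset_zchain l2 q2 dE.
by move=> k Z; apply: zchain_Dset_le.
Qed.
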